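(* For every integer $m\ge1$, the binary reflected Gray code ${\boldsymbol{B}}_m$ and the natural binary code ${\boldsymbol{N}}_m$ of order $m$ belong to the same modified Hadamard class.
   Context: Let $M=2^m$. The natural binary code (NBC) of order $m$ is the $M\times m$ binary matrix ${\boldsymbol{N}}_m$ whose $q$th row $\boldsymbol{n}_q=[n_{q,1},\ldots,n_{q,m}]$ is the base-2 representation of $q-1$, with $n_{q,m}$ the least significant bit. The binary reflected Gray code (BRGC) of order $m$ is the $M\times m$ matrix ${\boldsymbol{B}}_m$ with rows $\boldsymbol{b}_q$ given by $b_{q,1}=n_{q,1}$ and $b_{q,l}=n_{q,l-1}\oplus n_{q,l}$ for $l=2,\ldots,m$. A labeling is an $M\times m$ binary matrix with pairwise distinct rows; its columns are then nonzero. The first nonzero entry of a column is its pivot. A binary labeling matrix ${\boldsymbol{L}}$ is a reduced column echelon matrix if (1) every row containing a pivot has all its other entries zero, and (2) the pivot of column $l$ lies in a row below the pivot of column $l+1$, for $l=1,\ldots,m-1$. Every labeling ${\boldsymbol{L}}$ factors uniquely as ${\boldsymbol{L}}={\boldsymbol{L}}_{\mathrm{R}}{\boldsymbol{T}}$ with ${\boldsymbol{L}}_{\mathrm{R}}$ a reduced column echelon matrix and ${\boldsymbol{T}}$ an invertible $m\times m$ binary matrix (over GF(2)). The modified Hadamard class associated with a reduced column echelon matrix ${\boldsymbol{L}}_{\mathrm{R}}$ is the set $\{{\boldsymbol{L}}_{\mathrm{R}}{\boldsymbol{T}}:{\boldsymbol{T}}\text{ invertible }m\times m\text{ binary}\}$.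 *)

From mathcomp Require Import all_boot all_order all_algebra.
Set Implicit Arguments. Unset Strict Implicit. Unset Printing Implicit Defensive.
Import GRing.Theory.
Local Open Scope ring_scope.

(* Rows are indexed by i : 'I_(2^m) (i = q-1), columns by j : 'I_m (j = l-1). *)

(* Natural binary code: row i is base-2 representation of i, column m-1 the LSB;
   column j (l = j+1) holds the bit of weight 2^(m-1-j). *)
(* n_{q,l} with q = i+1, l = j+1: the bit of weight 2^(m-l) of q-1. *)
Definition nbc_bit (m i j : nat) : 'F_2 := (odd (i %/ 2 ^ (m.-1 - j)))%:R.

Definition NBC (m : nat) : 'M['F_2]_(2 ^ m, m) :=
  \matrix_(i < 2 ^ m, j < m) nbc_bit m i j.

(* Binary reflected Gray code: b_{q,1} = n_{q,1}, b_{q,l} = n_{q,l-1} xor n_{q,l}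
   (xor is addition in 'F_2). *)
Definition BRGC (m : nat) : 'M['F_2]_(2 ^ m, m) :=
  \matrix_(i < 2 ^ m, j < m)
    (if j == 0%N :> nat then nbc_bit m i j
     else nbc_bit m i j.-1 + nbc_bit m i j).

Definition labeling (M m : nat) (L : 'M['F_2]_(M, m)) : Prop :=
  forall i i' : 'I_M, row i L = row i' L -> i = i'.

Definition is_pivot (M m : nat) (L : 'M['F_2]_(M, m)) (i : 'I_M) (j : 'I_m) : Prop :=
  L i j != 0 /\ forall i' : 'I_M, (i' < i)%N -> L i' j = 0.

Definition reduced_col_echelon (M m : nat) (L : 'M['F_2]_(M, m)) : Prop :=
  labeling L /\
  (forall (i : 'I_M) (j j' : 'I_m), is_pivot L i j -> j' != j -> L i j' = 0) /\
  (forall (j j' : 'I_m) (i i' : 'I_M), j'= j.+1 :> nat ->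
      is_pivot L i j -> is_pivot L i' j' -> (i' < i)%N).

Definition mod_hadamard_class (M m : nat) (LR : 'M['F_2]_(M, m)) (L : 'M['F_2]_(M, m)) : Prop :=
  exists T : 'M['F_2]_m, T \in unitmx /\ L = LR *m T.

From mathcomp Require Import all_boot all_order all_algebra.
From mathcomp Require Import zify.
Import GRing.Theory.

(* The natural binary code is already a reduced column echelon matrix: the
   pivot of column j sits in row 2^(m-1-j), the least number having the bit of
   weight 2^(m-1-j), and that row is zero outside column j.  The Gray code is obtained from it by the
   column operations b_l = n_(l-1) + n_l, i.e. B_m = N_m (1 + S) with S the
   superdiagonal shift, and 1 + S is unitriangular hence invertible.  So N_m
   itself is the common reduced column echelon representative. *)

Lemma natF2_neq0 (b : bool) : ((b%:R : 'F_2) != 0)%R = b.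
Proof. by case: b; rewrite ?oner_neq0 ?eqxx. Qed.

Lemma natF2_inj (a b : bool) : (a%:R : 'F_2)%R = b%:R%R -> a = b.
Proof. by move=> E; rewrite -(natF2_neq0 a) -(natF2_neq0 b) E. Qed.

Lemma divn_expn2_bit (i e : nat) :
  i %/ 2 ^ e = odd (i %/ 2 ^ e) + (i %/ 2 ^ e.+1).*2.
Proof. by rewrite expnSr divnMA divn2 odd_double_half. Qed.

Lemma binary_digits_inj {m i i' : nat} : i < 2 ^ m -> i' < 2 ^ m ->
  (forall e, e < m -> odd (i %/ 2 ^ e) = odd (i' %/ 2 ^ e)) -> i = i'.
Proof.
move=> lti lti' digits.
have high_eq k : k <= m -> i %/ 2 ^ (m - k) = i' %/ 2 ^ (m - k).
  elim: k => [|k IHk] lekm; first by rewrite subn0 !divn_small.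
  rewrite (divn_expn2_bit i) (divn_expn2_bit i') digits; last by lia.
  have -> : (m - k.+1).+1 = m - k by lia.
  by rewrite IHk //; lia.
by have := high_eq m (leqnn m); rewrite subnn expn0 !divn1.
Qed.

Lemma odd_divn_expn2 (e e' : nat) : odd (2 ^ e %/ 2 ^ e') = (e == e').
Proof.
case: (ltngtP e e') => [lt_ee' | lt_e'e | ->]; last by rewrite divnn expn_gt0.
  by rewrite divn_small // ltn_exp2l.
rewrite -(subnK (ltnW lt_e'e)) expnD mulnK ?expn_gt0 // oddX orbF; lia.
Qed.

Lemma nbc_bitE (m i : nat) (j : 'I_m) :
  (nbc_bit m i j != 0)%R = odd (i %/ 2 ^ (m.-1 - j)).
Proof. exact: natF2_neq0. Qed.

Lemma NBC_labeling (m : nat) : labeling (NBC m).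
Proof.
move=> i i' eq_row; apply/val_inj.
apply: (binary_digits_inj (ltn_ord i) (ltn_ord i')) => e lt_em.
have lt_jm : m.-1 - e < m by lia.
have := congr1 (fun r : 'rV_m => r ord0 (Ordinal lt_jm)) eq_row.
rewrite !mxE /nbc_bit /=; have -> : m.-1 - (m.-1 - e) = e by lia.
exact: natF2_inj.
Qed.

Lemma NBC_pivot {m : nat} {i : 'I_(2 ^ m)} {j : 'I_m} :
  is_pivot (NBC m) i j -> (i : nat) = 2 ^ (m.-1 - j).
Proof.
case; rewrite mxE nbc_bitE; set e := m.-1 - j => odd_i below_i.
have lt_em : e < m by rewrite /e; have := ltn_ord j; lia.
have le_i : 2 ^ e <= i.
  by rewrite -divn_gt0 ?expn_gt0 //; case: (i %/ 2 ^ e) odd_i.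
apply/eqP; rewrite eqn_leq le_i andbT leqNgt; apply/negP => lt_i.
have lt_pow : 2 ^ e < 2 ^ m by rewrite ltn_exp2l.
have := below_i (Ordinal lt_pow).
rewrite mxE /nbc_bit -/e /= odd_divn_expn2 eqxx => /(_ lt_i)/eqP.
by rewrite oner_eq0.
Qed.

Lemma NBC_reduced_col_echelon (m : nat) : reduced_col_echelon (NBC m).
Proof.
split; [exact: NBC_labeling | split].
- move=> i j j' piv ne_j; rewrite mxE /nbc_bit (NBC_pivot piv) odd_divn_expn2.
  case: eqP => // E; move/eqP: ne_j; case; apply/val_inj => /=.
  by have := ltn_ord j; have := ltn_ord j'; lia.
- move=> j j' i i' Ej' piv piv'.
  rewrite (NBC_pivot piv) (NBC_pivot piv') ltn_exp2l //.
  by have := ltn_ord j'; lia.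
Qed.

Definition gray_mx (m : nat) : 'M['F_2]_m :=
  (1%:M + \matrix_(k < m, j < m) (k.+1 == j :> nat)%:R)%R.

Lemma gray_mx_unit (m : nat) : gray_mx m \in unitmx.
Proof.
rewrite unitmxE -det_tr det_trig.
  rewrite big1 ?unitr1 // => k _; rewrite !mxE eqxx /=.
  have -> : (k.+1 == k :> nat) = false by lia.
  by rewrite addr0.
apply/is_trig_mxP => a b lt_ab; rewrite !mxE.
have -> : (b == a) = false by apply/negbTE; rewrite neq_ltn lt_ab orbT.
have -> : (b.+1 == a :> nat) = false by lia.
by rewrite addr0.
Qed.

Lemma BRGC_NBC (m : nat) : BRGC m = (NBC m *m gray_mx m)%R.
Proof.
rewrite mulmxDr mulmx1; apply/matrixP => i j; rewrite !mxE.
case: eqP => [j0 | jn0].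
  by rewrite big1 ?addr0 // => k _; rewrite !mxE j0 mulr0.
have lt_pred : j.-1 < m by have := ltn_ord j; lia.
rewrite (bigD1 (Ordinal lt_pred)) //= big1 ?addr0.
  rewrite !mxE /=; have -> : (j.-1).+1 == j by apply/eqP; lia.
  by rewrite mulr1 addrC.
move=> k ne_k; rewrite !mxE.
have -> : (k.+1 == j :> nat) = false.
  by apply/negbTE; apply: contra ne_k => /eqP E; apply/eqP/val_inj => /=; lia.
by rewrite mulr0.
Qed.

Lemma mod_hadamard_class_refl (M m : nat) (L : 'M['F_2]_(M, m)) :
  mod_hadamard_class L L.
Proof. by exists 1%:M%R; rewrite unitmx1 mulmx1. Qed.

Theorem theorem3 (m : nat) (hm : (1 <= m)%N) :
  exists LR : 'M['F_2]_(2 ^ m, m),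
    reduced_col_echelon LR /\
    mod_hadamard_class LR (BRGC m) /\ mod_hadamard_class LR (NBC m).
Proof.
exists (NBC m); split; first exact: NBC_reduced_col_echelon.
split; last exact: mod_hadamard_class_refl.
by exists (gray_mx m); rewrite gray_mx_unit BRGC_NBC.
Qed.
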